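(* Let $v\in V$, $e\in E_v$, and let $z\in\mathcal B_v$ be acceptable (i.e. $C_v(z)=z$) with $z(e)<b(e)$. The following are equivalent: (i) $e$ is interesting for $v$ under $z$; (ii) there is an acceptable $\tilde z\in\mathcal B_v$ such that $\tilde z\succ_v z$ and $\tilde z(e)>z(e)$; (iii) $C_v(z+\mathbf 1^e)\ne z$; (iv) $C_v(z+\mathbf 1^e)$ is either (a) $z+\mathbf 1^e$, or (b) $z+\mathbf 1^e-\mathbf 1^{e'}$ for some $e'\in E_v\setminus\{e\}$.
   Context: Let $G=(V,E)$ be a finite bipartite graph and $b\in\mathbb Z_+^E$ capacities. For $v\in V$, $E_v$ is the set of edges at $v$, $\mathcal B_v=\{z\in\mathbb Z_+^{E_v}: z(e)\le b(e)\ \forall e\in E_v\}$, $\mathbf 1^e$ the unit vector of $e$ in $\mathbb Z^{E_v}$, $|z|=\sum_e|z(e)|$, and $\wedge,\vee$ componentwise min and max. $C_v:\mathcal B_v\to\mathcal B_v$ is a choice function with $C_v(z)\le z$ such that for all $z,z'\in\mathcal B_v$: (A1) if $z\ge z'\ge C_v(z)$ then $C_v(z')=C_v(z)$; (A2) if $z\ge z'$ then $C_v(z)\wedge z'\le C_v(z')$; (A3) if $z\ge z'$ then $|C_v(z)|\ge|C_v(z')|$. $z$ is acceptable if $C_v(z)=z$; for distinct acceptable $z,z'$, $z'\prec_v z$ (equivalently $z\succ_v z'$) means $C_v(z\vee z')=z$. An edge $e\in E_v$ is interesting for $v$ under acceptable $z$ if there is $z'\in\mathcal B_v$ with $z'(e)>z(e)$,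 $z'(e')=z(e')$ for all $e'\ne e$, and $C_v(z')(e)>z(e)$. *)

(* Local (single-vertex) model of the setting:
   the finite type Ev plays the role of E_v, the set of edges at a vertex v. *)
From mathcomp Require Import all_boot all_order all_algebra.
Set Implicit Arguments. Unset Strict Implicit. Unset Printing Implicit Defensive.

Definition vec (Ev : finType) := {ffun Ev -> nat}.

Definition vle (Ev : finType) (z z' : vec Ev) : Prop := forall e, z e <= z' e.

Definition inB (Ev : finType) (b : Ev -> nat) (z : vec Ev) : Prop := vle z [ffun e => b e].

Definition unitv (Ev : finType) (e : Ev) : vec Ev := [ffun x => nat_of_bool (x == e)].

Definition vadd (Ev : finType) (z z' : vec Ev) : vec Ev := [ffun x => z x + z' x].
Definition vmeet (Ev : finType) (z z' : vec Ev) : vec Ev := [ffun x => minn (z x) (z' x)].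
Definition vjoin (Ev : finType) (z z' : vec Ev) : vec Ev := [ffun x => maxn (z x) (z' x)].

Definition vnorm (Ev : finType) (z : vec Ev) : nat := \sum_(e : Ev) z e.

(* C_v : B_v -> B_v is a choice function satisfying (A1)-(A3);
   C is given as a total function, constrained only on B_v. *)
Definition choice_fun (Ev : finType) (b : Ev -> nat) (C : vec Ev -> vec Ev) : Prop :=
  [/\ (forall z, inB b z -> vle (C z) z),
      (* (A1) *)
      (forall z z', inB b z -> inB b z' -> vle z' z -> vle (C z) z' -> C z' = C z),
      (* (A2) *)
      (forall z z', inB b z -> inB b z' -> vle z' z -> vle (vmeet (C z) z') (C z')) &
      (* (A3) *)
      (forall z z', inB b z -> inB b z' -> vle z' z -> vnorm (C z') <= vnorm (C z))].

Definition acceptable (Ev : finType) (C : vec Ev -> vec Ev) (z : vec Ev) : Prop := C z = z.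

Definition succv (Ev : finType) (b : Ev -> nat) (C : vec Ev -> vec Ev) (z z' : vec Ev) : Prop :=
  [/\ inB b z /\ inB b z', acceptable C z, acceptable C z', z <> z' & C (vjoin z z') = z].

Definition interesting (Ev : finType) (b : Ev -> nat) (C : vec Ev -> vec Ev)
    (z : vec Ev) (e : Ev) : Prop :=
  exists z' : vec Ev, [/\ inB b z', z e < z' e, (forall e', e' != e -> z' e' = z e')
                        & z e < C z' e].

From mathcomp Require Import all_boot all_order all_algebra.
From mathcomp Require Import zify.

Set Implicit Arguments.
Unset Strict Implicit.
Unset Printing Implicit Defensive.

(* Everything turns on the single coordinate C(z + 1^e)(e).  If it exceeds
   z(e), then z + 1^e itself witnesses that e is interesting; conversely a
   witness z' yields the acceptable vector C(z'), which beats z by (A1), and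
   (A2) applied to z + 1^e <= vjoin C(z') z pushes C(z + 1^e)(e) above z(e).
   Otherwise C(z + 1^e) <= z, hence C(z + 1^e) = z by (A1).  Finally,
   C(z + 1^e) <= z + 1^e has size at least |z| = |z + 1^e| - 1 by (A3), so it
   misses at most one unit. *)

Section Vectors.
Variable Ev : finType.
Implicit Types (y z w d : vec Ev) (e x : Ev).

Lemma vadd_unitvE z e x : vadd z (unitv e) x = z x + (x == e).
Proof. by rewrite !ffunE. Qed.

Lemma vle_refl z : vle z z.
Proof. by []. Qed.

Lemma vle_trans y z w : vle y z -> vle z w -> vle y w.
Proof. by move=> yz zw x; apply: leq_trans (yz x) (zw x). Qed.

Lemma vle_vjoinl y z : vle y (vjoin y z).
Proof. by move=> x; rewrite ffunE leq_maxl. Qed.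

Lemma vjoin_vle y z w : vle y w -> vle z w -> vle (vjoin y z) w.
Proof. by move=> yw zw x; rewrite ffunE geq_max yw zw. Qed.

Lemma vle_add_unitv z e : vle z (vadd z (unitv e)).
Proof. by move=> x; rewrite vadd_unitvE leq_addr. Qed.

Lemma inB_vle b y z : vle y z -> inB b z -> inB b y.
Proof. exact: vle_trans. Qed.

Lemma inB_vjoin b y z : inB b y -> inB b z -> inB b (vjoin y z).
Proof. exact: vjoin_vle. Qed.

Lemma inB_add_unitv b z e : inB b z -> z e < b e -> inB b (vadd z (unitv e)).
Proof.
move=> Bz lt_e x; rewrite vadd_unitvE ffunE.
by case: eqP => [->|_]; [rewrite addn1 | rewrite addn0 -(ffunE (fun x => b x))].
Qed.

Lemma vnorm_vadd y z : vnorm (vadd y z) = vnorm y + vnorm z.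
Proof. by rewrite /vnorm -big_split; apply: eq_bigr => x _; rewrite ffunE. Qed.

Lemma vnorm_unitv e : vnorm (unitv e) = 1.
Proof.
rewrite /vnorm (bigD1 e) //= big1 => [|x /negbTE]; rewrite ffunE ?eqxx //.
by move=> ->.
Qed.

Lemma vnorm_le1 d : vnorm d <= 1 -> d = [ffun=> 0] \/ exists e, d = unitv e.
Proof.
case: (pickP (fun x => d x != 0)) => [e d_e|d0] le_d1; last first.
  by left; apply/ffunP => x; rewrite ffunE; apply/eqP/negbFE/d0.
right; exists e; move: le_d1; rewrite /vnorm (bigD1 e) //= => le_d1.
have /eqP : \sum_(x | x != e) d x = 0 by move: d_e le_d1; lia.
rewrite sum_nat_eq0 => /forallP rest0.
apply/ffunP => x; rewrite ffunE; case: eqVneq => [->|ne] /=.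
- by move: d_e le_d1; lia.
- by apply/eqP; move: (rest0 x); rewrite ne.
Qed.

Lemma vle_vnorm_succ y w :
  vle y w -> vnorm w <= (vnorm y).+1 -> y = w \/ exists e, vadd y (unitv e) = w.
Proof.
move=> yw; set d : vec Ev := [ffun x => w x - y x].
have wE : vadd y d = w by apply/ffunP => x; rewrite !ffunE subnKC.
rewrite -wE vnorm_vadd -addn1 leq_add2l => /vnorm_le1[d0|[e de]].
- by left; apply/ffunP => x; rewrite d0 !ffunE addn0.
- by right; exists e; rewrite de.
Qed.

End Vectors.

Section ChoiceFunction.
Variables (Ev : finType) (b : Ev -> nat) (C : vec Ev -> vec Ev).
Hypothesis HC : choice_fun b C.

Lemma choice_le z : inB b z -> vle (C z) z.
Proof. by case: HC => le_C _ _ _; apply: le_C. Qed.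

Lemma choice_irrelevance z z' :
  inB b z -> inB b z' -> vle z' z -> vle (C z) z' -> C z' = C z.
Proof. by case: HC => _ A1 _ _; apply: A1. Qed.

Lemma choice_substitutability z z' :
  inB b z -> inB b z' -> vle z' z -> vle (vmeet (C z) z') (C z').
Proof. by case: HC => _ _ A2 _; apply: A2. Qed.

Lemma choice_vnorm_monotone z z' :
  inB b z -> inB b z' -> vle z' z -> vnorm (C z') <= vnorm (C z).
Proof. by case: HC => _ _ _ A3; apply: A3. Qed.

Lemma inB_choice z : inB b z -> inB b (C z).
Proof. by move=> Bz; apply: inB_vle (choice_le Bz) Bz. Qed.

Lemma choice_acceptable z : inB b z -> acceptable C (C z).
Proof.
by move=> Bz; apply: choice_irrelevance Bz (inB_choice Bz) (choice_le Bz) (vle_refl _).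
Qed.

Lemma interesting_succv z e :
  inB b z -> acceptable C z -> interesting b C z e ->
  exists zt, [/\ inB b zt, acceptable C zt, succv b C zt z & z e < zt e].
Proof.
move=> Bz Az [z' [Bz' lt_e eq_ne lt_Ce]].
have zz' : vle z z'.
  by move=> x; case: (eqVneq x e) => [->|/eq_ne->]; [apply: ltnW|].
have Bu := inB_choice Bz'; have Au := choice_acceptable Bz'.
have Cj : C (vjoin (C z') z) = C z'.
  apply: choice_irrelevance (vle_vjoinl _ _) => //; first exact: inB_vjoin.
  exact: vjoin_vle (choice_le Bz') zz'.
exists (C z'); split => //; split => // Cz'z.
by move: lt_Ce; rewrite Cz'z ltnn.
Qed.

Variables (z : vec Ev) (e : Ev).
Hypotheses (Bz : inB b z) (Az : acceptable C z) (lt_zb : z e < b e).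
Local Notation w := (vadd z (unitv e)).

Let Bw : inB b w := inB_add_unitv Bz lt_zb.

Lemma choice_add_unitv_neq : C w <> z <-> z e < C w e.
Proof.
split=> [Cw_neq|lt_e Cwz]; last by move: lt_e; rewrite Cwz ltnn.
rewrite ltnNge; apply/negP => le_e; apply: Cw_neq.
have Cwz : vle (C w) z.
  move=> x; case: (eqVneq x e) => [-> //|ne].
  by have := choice_le Bw x; rewrite vadd_unitvE (negbTE ne) addn0.
by rewrite -{2}Az (choice_irrelevance Bw Bz (vle_add_unitv _ _) Cwz).
Qed.

Lemma succv_lt_choice_add_unitv zt : succv b C zt z -> z e < zt e -> z e < C w e.
Proof.
case=> [[Bzt _] _ _ _ Cj] lt_e.
have wj : vle w (vjoin zt z).
  move=> x; rewrite vadd_unitvE ffunE; case: (eqVneq x e) => [->|_] /=.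
    by rewrite addn1 (leq_trans lt_e) ?leq_maxl.
  by rewrite addn0 leq_maxr.
have := choice_substitutability (inB_vjoin Bzt Bz) Bw wj e.
rewrite Cj !ffunE eqxx; lia.
Qed.

Lemma choice_add_unitv_cases :
  z e < C w e -> C w = w \/ exists2 e', e' != e & vadd (C w) (unitv e') = w.
Proof.
move=> lt_e; have Cww := choice_le Bw.
have : vnorm w <= (vnorm (C w)).+1.
  rewrite vnorm_vadd vnorm_unitv addn1 ltnS -{1}Az.
  exact: choice_vnorm_monotone (vle_add_unitv _ _).
case/(vle_vnorm_succ Cww) => [|[e' Ce']]; [by left | right; exists e' => //].
apply: contraTneq lt_e => e'e; move/ffunP/(_ e): Ce'.
by rewrite !vadd_unitvE e'e eqxx; lia.
Qed.

Lemma interesting_of_lt_choice_add_unitv : z e < C w e -> interesting b C z e.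
Proof.
exists w; split=> //; first by rewrite vadd_unitvE eqxx addn1.
by move=> x /negbTE ne; rewrite vadd_unitvE ne addn0.
Qed.

End ChoiceFunction.

Theorem lemma3p1 (Ev : finType) (b : Ev -> nat) (C : vec Ev -> vec Ev)
    (HC : choice_fun b C) (z : vec Ev) (e : Ev)
    (Hz : inB b z) (Hacc : acceptable C z) (Hzb : z e < b e) :
  [<-> interesting b C z e;
       exists zt : vec Ev, [/\ inB b zt, acceptable C zt, succv b C zt z & z e < zt e];
       C (vadd z (unitv e)) <> z;
       C (vadd z (unitv e)) = vadd z (unitv e) \/
       exists2 e' : Ev, e' != e &
         forall x : Ev, (C (vadd z (unitv e)) x : int)
                        = ((z x)%:Z + (unitv e x)%:Z - (unitv e' x)%:Z)%R].
Proof.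
have neq_lt := choice_add_unitv_neq HC Hz Hacc Hzb.
tfae.
- exact: interesting_succv.
- by case=> zt [_ _ zt_z lt_e]; apply/neq_lt/(succv_lt_choice_add_unitv HC Hz Hzb zt_z).
- case/neq_lt/(choice_add_unitv_cases HC Hz Hacc Hzb) => [|[e' ne Ce']]; first by left.
  by right; exists e' => // x; move/ffunP/(_ x): Ce'; rewrite !ffunE; lia.
- move=> iv; apply: (interesting_of_lt_choice_add_unitv Hz Hzb).
  case: iv => [->|[e' ne /(_ e)]]; first by rewrite vadd_unitvE eqxx addn1.
  by rewrite !ffunE eqxx eq_sym (negbTE ne); lia.
Qed.
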